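(* Let $\Omega\subset\mathbb R^d$ be a bounded Borel set, $f:\Omega\to[0,\infty)$ with $\int_\Omega f=1$, $p\ge1$, $x_1,\dots,x_k\in\Omega$, and $h_1,\dots,h_k:[0,1]\to[0,\infty)$ strictly increasing. Let $(A_i)_{i=1}^k$ be an equilibrium and let $(B_i)_{i=1}^k$ be a partition of $\Omega$ with $C(x,(B_i)_i)\le C(x,(A_i)_i)$ for $f$-a.e. $x\in\Omega$. Then $A_i=B_i$ up to $f$-negligible sets for every $i$.
   Context: A partition of $\Omega$ is a family of Borel sets pairwise disjoint up to $f$-negligible sets whose union has full $f\,dx$-measure. For a partition $(B_i)_{i=1}^k$, $C(x,(B_i)_i)=\sum_{i=1}^k[|x-x_i|^p+h_i(\int_{B_i}f\,dx)]\mathbf 1_{B_i}(x)$. A partition $(A_i)$ is an equilibrium if, with $c_j=\int_{A_j}f$, for every $i$: $A_i=\{x:|x-x_i|^p+h_i(c_i)<|x-x_j|^p+h_j(c_j)\ \forall j\ne i\}$ up to $f$-negligible sets. *)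

From HB Require Import structures.
From mathcomp Require Import all_boot all_order all_algebra.
From mathcomp Require Import all_classical all_reals all_analysis.
Set Implicit Arguments. Unset Strict Implicit. Unset Printing Implicit Defensive.
Import Order.TTheory GRing.Theory Num.Theory.
Import numFieldNormedType.Exports.
Local Open Scope classical_set_scope.
Local Open Scope ring_scope.

(* R^d is modelled as [d.-tuple R] with its
   library (product/Borel) sigma-algebra [measure_tuple_display]. *)

Definition edist (R : realType) (d : nat) (x y : d.-tuple R) : R :=
  Num.sqrt (\sum_(i < d) (tnth x i - tnth y i) ^+ 2).

Definition box (R : realType) (d : nat) (a b : d.-tuple R) : set (d.-tuple R) :=
  [set x | forall i : 'I_d, tnth a i <= tnth x i <= tnth b i].

(* lam is (the) Lebesgue measure on the Borel sets of R^d: it gives boxes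
   their volume (this characterizes it uniquely on Borel sets). *)
Definition is_lebesgue (R : realType) (d : nat)
  (lam : {measure set (d.-tuple R) -> \bar R}) : Prop :=
  forall a b : d.-tuple R, (forall i, tnth a i <= tnth b i) ->
    lam (box a b) = (\prod_(i < d) (tnth b i - tnth a i))%:E.

Definition bounded_Rd (R : realType) (d : nat) (Om : set (d.-tuple R)) : Prop :=
  exists M : R, forall x, Om x -> edist x (nseq_tuple d 0) <= M.

Definition fmass (R : realType) (d : nat)
  (lam : {measure set (d.-tuple R) -> \bar R}) (Om : set (d.-tuple R))
  (f : d.-tuple R -> R) (S : set (d.-tuple R)) : \bar R :=
  (\int[lam]_(x in S `&` Om) (f x)%:E)%E.

Definition fnegligible (R : realType) (d : nat)
  (lam : {measure set (d.-tuple R) -> \bar R}) (Om : set (d.-tuple R))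
  (f : d.-tuple R -> R) (S : set (d.-tuple R)) : Prop :=
  exists N, [/\ measurable N, S `<=` N & fmass lam Om f N = 0%E].

Definition fae_eq (R : realType) (d : nat)
  (lam : {measure set (d.-tuple R) -> \bar R}) (Om : set (d.-tuple R))
  (f : d.-tuple R -> R) (S T : set (d.-tuple R)) : Prop :=
  fnegligible lam Om f ((S `\` T) `|` (T `\` S)).

Definition fpartition (R : realType) (d k : nat)
  (lam : {measure set (d.-tuple R) -> \bar R}) (Om : set (d.-tuple R))
  (f : d.-tuple R -> R) (B : 'I_k -> set (d.-tuple R)) : Prop :=
  [/\ forall i, measurable (B i),
      forall i j, i != j -> fnegligible lam Om f (B i `&` B j)
    & fnegligible lam Om f (Om `\` \bigcup_(i in [set: 'I_k]) B i)].

Definition cellmass (R : realType) (d k : nat)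
  (lam : {measure set (d.-tuple R) -> \bar R}) (Om : set (d.-tuple R))
  (f : d.-tuple R -> R) (B : 'I_k -> set (d.-tuple R)) (i : 'I_k) : R :=
  fine (fmass lam Om f (B i)).

Definition cost (R : realType) (d k : nat)
  (lam : {measure set (d.-tuple R) -> \bar R}) (Om : set (d.-tuple R))
  (f : d.-tuple R -> R) (p : R) (xs : 'I_k -> d.-tuple R)
  (h : 'I_k -> R -> R) (B : 'I_k -> set (d.-tuple R)) (x : d.-tuple R) : R :=
  \sum_(i < k) ((edist x (xs i)) `^ p + h i (cellmass lam Om f B i))
                 * \1_(B i) x.

Definition equilibrium (R : realType) (d k : nat)
  (lam : {measure set (d.-tuple R) -> \bar R}) (Om : set (d.-tuple R))
  (f : d.-tuple R -> R) (p : R) (xs : 'I_k -> d.-tuple R)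
  (h : 'I_k -> R -> R) (A : 'I_k -> set (d.-tuple R)) : Prop :=
  fpartition lam Om f A /\
  forall i : 'I_k,
    fae_eq lam Om f (A i)
      [set x | Om x /\ forall j : 'I_k, j != i ->
         (edist x (xs i)) `^ p + h i (cellmass lam Om f A i)
         < (edist x (xs j)) `^ p + h j (cellmass lam Om f A j)].

From Pilot Require Import Defs.
From HB Require Import structures.
From mathcomp Require Import all_boot all_order all_algebra.
From mathcomp Require Import all_classical all_reals all_analysis.
From mathcomp Require Import measurable_realfun lra.
Import Order.TTheory GRing.Theory Num.Theory.
Local Open Scope classical_set_scope.
Local Open Scope ring_scope.

(* Let c_j and c'_j be the f-masses of A_j and B_j.  At f-a.e. x in A_i and
   B_j, the cost comparison C(x, B) <= C(x, A) together with the equilibrium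
   inequalities at x gives h_j(c'_j) <= h_j(c_j), strictly if i != j.  Since
   h_j is increasing, c'_j <= c_j for every j (trivially when B_j is
   f-negligible); both partitions have total mass 1, hence c' = c, and then
   the strict case is impossible: a.e. x lies in cells with the same index. *)

Lemma ler_sum_eq (R : numDomainType) (I : finType) (F G : I -> R) :
  (forall i, F i <= G i) -> \sum_i F i = \sum_i G i -> forall i, F i = G i.
Proof.
move=> FG sumFG i; have GF0 : \sum_i (G i - F i) = 0 by rewrite sumrB sumFG subrr.
apply/eqP; rewrite eq_sym -subr_eq0; apply/eqP.
exact: (psumr_eq0P (fun j _ => etrans (subr_ge0 _ _) (FG j)) GF0 (isT : predT i)).
Qed.

Lemma cost_in_cell {R : realType} {d k : nat} {lam : {measure set (d.-tuple R) -> \bar R}}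
    {Om : set (d.-tuple R)} {f : d.-tuple R -> R} {p : R} {xs : 'I_k -> d.-tuple R}
    {h : 'I_k -> R -> R} {B : 'I_k -> set (d.-tuple R)} {x i} :
  B i x -> (forall j, B j x -> j = i) ->
  cost lam Om f p xs h B x = Defs.edist x (xs i) `^ p + h i (cellmass lam Om f B i).
Proof.
move=> Bi uniqx; rewrite /cost (bigD1 i) //= big1 ?addr0.
  by rewrite indicE mem_set // mulr1.
by move=> j ji; rewrite indicE memNset ?mulr0 // => /uniqx /eqP; rewrite (negbTE ji).
Qed.

Definition fae {R : realType} {d : nat}
  (lam : {measure set (d.-tuple R) -> \bar R}) (Om : set (d.-tuple R))
  (f : d.-tuple R -> R) (P : d.-tuple R -> Prop) : Prop :=
  fnegligible lam Om f [set x | ~ P x].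

Section density.
Context {R : realType} {d : nat} {lam : {measure set (d.-tuple R) -> \bar R}}.
Context {Om : set (d.-tuple R)} {f : d.-tuple R -> R}.
Hypotheses (mOm : measurable Om) (mf : measurable_fun Om f)
  (f0 : forall x, Om x -> 0 <= f x)
  (f1 : (\int[lam]_(x in Om) (f x)%:E = 1)%E).
Local Notation fmass := (fmass lam Om f).
Local Notation fnegligible := (fnegligible lam Om f).
Local Notation fae := (fae lam Om f).
Local Open Scope ereal_scope.

Let mfE S : measurable_fun (S `&` Om) (EFin \o f).
Proof. by apply/measurable_EFinP; exact: (measurable_funS mOm (@subIsetr _ S Om) mf). Qed.

Lemma fmass_ge0 S : 0 <= fmass S.
Proof. by apply: integral_ge0 => x [_ Ox]; rewrite lee_fin f0. Qed.

Lemma le_fmass {S T} : measurable S -> measurable T -> S `<=` T ->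
  fmass S <= fmass T.
Proof.
move=> mS mT ST.
apply: (ge0_subset_integral lam (measurableI _ _ mS mOm) (measurableI _ _ mT mOm) (mfE T)).
- by move=> x [_ Ox]; rewrite lee_fin f0.
- by move=> x [Sx Ox]; split => //; apply: ST.
Qed.

Lemma fmassD_null {S N} : measurable S -> measurable N -> fmass N = 0 ->
  fmass (S `\` N) = fmass S.
Proof.
move=> mS mN N0; have mSN := measurableI _ _ mS mN.
rewrite -[in RHS](setUIDK S N) /fmass (setIUl (S `&` N)) integral_setU.
- suff -> : \int[lam]_(x in S `&` N `&` Om) (f x)%:E = 0 by rewrite add0e.
  apply/eqP; rewrite eq_le integral_ge0 ?andbT; last first.
    by move=> x [_ Ox]; rewrite lee_fin f0.
  by rewrite -N0 le_fmass // => x [].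
- exact: measurableI.
- by apply: measurableI => //; apply: measurableD.
- by rewrite -(setIUl (S `&` N)) setUIDK; apply: mfE.
- by apply/disj_setPS => x [[[_ Nx] _] [[_ /(_ Nx)]]].
Qed.

Lemma fmassU_null {N1 N2} : measurable N1 -> measurable N2 ->
  fmass N1 = 0 -> fmass N2 = 0 -> fmass (N1 `|` N2) = 0.
Proof.
move=> m1 m2 n1 n2; have m12 := measurableU _ _ m1 m2.
rewrite -(fmassD_null m12 m2 n2); apply/eqP; rewrite eq_le fmass_ge0 andbT -n1.
by apply: le_fmass => //; [exact: measurableD | move=> x [[]]].
Qed.

Lemma fmass_bigsetU_null (I : Type) (s : seq I) (N : I -> set (d.-tuple R)) :
  (forall i, measurable (N i)) -> (forall i, fmass (N i) = 0) ->
  fmass (\big[setU/set0]_(i <- s) N i) = 0.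
Proof.
move=> mN N0; elim: s => [|i s IH]; first by rewrite big_nil /fmass set0I integral_set0.
rewrite big_cons fmassU_null //; exact: bigsetU_measurable.
Qed.

Lemma fae_mono {P Q : d.-tuple R -> Prop} :
  fae P -> (forall x, P x -> Q x) -> fae Q.
Proof. by move=> [N [mN PN N0]] PQ; exists N; split=> // x /= nQx; apply: PN => /PQ. Qed.

Lemma fnegligible_fae {S} : fnegligible S -> fae (fun x => ~ S x).
Proof. by move=> [N [mN SN N0]]; exists N; split=> // x /contrapT /SN. Qed.

Lemma fae_forall {I : finType} {P : I -> d.-tuple R -> Prop} :
  (forall i, fae (P i)) -> fae (fun x => forall i, P i x).
Proof.
move=> /choice[N /all_and3[mN PN N0]].
exists (\big[setU/set0]_(i <- enum I) N i); split.
- exact: bigsetU_measurable.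
- move=> x /= /existsNP[i /PN Nix]; rewrite -bigcup_seq.
  by exists i => //=; rewrite mem_enum.
- exact: fmass_bigsetU_null.
Qed.

Lemma fae_and {P Q : d.-tuple R -> Prop} :
  fae P -> fae Q -> fae (fun x => P x /\ Q x).
Proof.
move=> aeP aeQ.
have aePQ : fae (fun x => forall b : bool, (if b then P else Q) x).
  by apply: fae_forall => -[].
apply: (fae_mono aePQ) => x PQx.
by split; [apply: (PQx true)|apply: (PQx false)].
Qed.

Lemma fae_Om : fae Om.
Proof.
exists (~` Om); split => //; first exact: measurableC.
by rewrite /fmass setICl integral_set0.
Qed.

Lemma fae_eqP S T : fae_eq lam Om f S T <-> fae (fun x => S x <-> T x).
Proof.
split=> -[N [mN SN N0]]; exists N; split=> // x.
- move=> nST; apply: SN; apply: contrapT => nD; apply: nST.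
  by split=> [Sx|Tx]; apply: contrapT => nx; apply: nD; [left|right].
- by move=> STx; apply: SN => ST; case: STx => -[/ST].
Qed.

Lemma fae_witness {P : d.-tuple R -> Prop} {S} : measurable S -> fae P ->
  fmass S = 0 \/ exists x, S x /\ P x.
Proof.
move=> mS [N [mN PN N0]]; have [[x [Sx Nx]]|] := pselect (exists x, S x /\ ~ N x).
  by right; exists x; split=> //; apply: contrapT => /PN.
move=> /forallNP SN; left; apply/eqP; rewrite eq_le fmass_ge0 andbT -N0.
by apply: le_fmass => // x Sx; apply: contrapT => Nx; apply: (SN x).
Qed.

Lemma fmass_le1 {S} : measurable S -> fmass S <= 1.
Proof.
move=> mS; rewrite -f1; apply: (ge0_subset_integral lam (measurableI _ _ mS mOm) mOm).
- exact/measurable_EFinP.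
- by move=> x Ox; rewrite lee_fin f0.
- by move=> x [].
Qed.

Lemma fmass_fin_num {S} : measurable S -> fmass S \is a fin_num.
Proof.
move=> mS; rewrite ge0_fin_numE ?fmass_ge0 //.
exact: (le_lt_trans (fmass_le1 mS) (ltry _)).
Qed.

Section partition.
Context {k : nat} {B : 'I_k -> set (d.-tuple R)}.
Hypothesis hB : fpartition lam Om f B.
Local Notation cellmass := (cellmass lam Om f B).

Lemma fpartition_ae_cell :
  fae (fun x => exists i, B i x /\ forall j, B j x -> j = i).
Proof.
case: hB => _ hBo hBc.
have cover : fae (fun x => exists i, B i x).
  apply: (fae_mono (fae_and fae_Om (fnegligible_fae hBc))) => x [Ox nD].
  by apply: contrapT => nB; apply: nD; split=> // -[i _ Bi]; apply: nB; exists i.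
have disj : fae (fun x => forall i j, B i x -> B j x -> i = j).
  apply: fae_forall => i; apply: fae_forall => j.
  have [->|ij] := eqVneq i j; first exact: (fae_mono fae_Om).
  by apply: (fae_mono (fnegligible_fae (hBo i j ij))) => x nBij Bi Bj; case: nBij.
apply: (fae_mono (fae_and cover disj)) => x [[i Bi] uniqx].
by exists i; split=> // j Bj; apply: uniqx.
Qed.

Lemma cellmassE i : (cellmass i)%:E = fmass (B i).
Proof. by rewrite fineK // fmass_fin_num //; case: hB. Qed.

Lemma cellmass_itv i : (0 <= cellmass i <= 1)%R.
Proof. by rewrite -!lee_fin cellmassE fmass_ge0 fmass_le1 //; case: hB. Qed.

Lemma fpartition_cellmass_sum : (\sum_i cellmass i)%R = 1%R.
Proof.
have mB : forall i, measurable (B i) by case: hB.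
have [N [mN cellN N0]] := fpartition_ae_cell.
have cellsD : \big[setU/set0]_(i <- index_enum 'I_k) ((B i `\` N) `&` Om) =
    (Om `\` N) `&` Om.
  rewrite -bigcup_seq; apply/seteqP; split=> x /=.
    by move=> [i _ [[_ Nx] Ox]].
  move=> [[Ox Nx] _]; have [i [Bi _]] : exists i, B i x /\ forall j, B j x -> j = i.
    by apply: contrapT => /cellN.
  by exists i; rewrite /= ?mem_index_enum.
apply: EFin_inj; rewrite -sumEFin.
under eq_bigr => i _ do rewrite cellmassE -(fmassD_null (mB i) mN N0).
rewrite -integral_bigsetU_EFin //= ?cellsD.
- by rewrite -/(fmass (Om `\` N)) fmassD_null // /fmass setIid.
- by move=> i; apply: measurableI => //; apply: measurableD.
- exact: index_enum_uniq.
- apply/trivIsetP => i j _ _ ij; apply/seteqP; split=> // x [[[Bi Nx] _] [[Bj _] _]].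
  by apply: Nx; apply: cellN => -[l [_ uniql]]; move: ij; rewrite (uniql i Bi) (uniql j Bj) eqxx.
- by apply/measurable_EFinP; apply: (measurable_funS mOm _ mf) => x [].
Qed.

End partition.

Section comparison.
Context {k : nat} {p : R} {xs : 'I_k -> d.-tuple R} {h : 'I_k -> R -> R}.
Hypothesis hinc : forall i s t, (0 <= s -> t <= 1 -> s < t -> h i s < h i t)%R.
Context {A B : 'I_k -> set (d.-tuple R)}.
Hypotheses (hA : equilibrium lam Om f p xs h A) (hB : fpartition lam Om f B).
Hypothesis hC : fnegligible
  [set x | Om x /\ ~ (cost lam Om f p xs h B x <= cost lam Om f p xs h A x)%R].
Local Notation c := (cellmass lam Om f A).
Local Notation c' := (cellmass lam Om f B).

Lemma ae_cellmass_cmp : fae (fun x => forall i j, A i x -> B j x ->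
  h j (c' j) <= h j (c j) /\ (i != j -> h j (c' j) < h j (c j)))%R.
Proof.
have [pA eqA] := hA.
have aeC : fae (fun x => Om x -> cost lam Om f p xs h B x <= cost lam Om f p xs h A x)%R.
  by apply: (fae_mono (fnegligible_fae hC)) => x nC Ox; apply: contrapT => nle; apply: nC.
have aeEq : fae (fun x => forall i, A i x -> Om x /\ forall j, j != i ->
    Defs.edist x (xs i) `^ p + h i (c i) < Defs.edist x (xs j) `^ p + h j (c j))%R.
  by apply: fae_forall => i; apply: (fae_mono ((fae_eqP _ _).1 (eqA i))) => x /[apply].
have cells := fae_and (fpartition_ae_cell pA) (fpartition_ae_cell hB).
apply: (fae_mono (fae_and cells (fae_and aeC aeEq))).
move=> x [[[a [Aa ua]] [b [Bb ub]]] [le_cost eqx]] i j Ai Bj.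
have ai := ua i Ai; have bj := ub j Bj; subst a b.
have [Ox lt_cost] := eqx i Ai.
move: (le_cost Ox); rewrite (cost_in_cell Aa ua) (cost_in_cell Bb ub) => {}le_cost.
have [ij|ij] := eqVneq i j; first by subst j; split=> //; lra.
have := lt_cost j; rewrite eq_sym ij => /(_ isT) lt_ij.
by split=> [|_]; lra.
Qed.

Lemma cellmass_le j : (c' j <= c j)%R.
Proof.
have [pA _] := hA; have [mB _ _] := hB.
have [c'0|[x [Bx [[i [Ai _]] cmp]]]] :=
  fae_witness (mB j) (fae_and (fpartition_ae_cell pA) ae_cellmass_cmp).
  have -> : c' j = 0%R by apply: EFin_inj; rewrite cellmassE.
  by case/andP: (cellmass_itv pA j).
have [hle _] := cmp i j Ai Bx.
have /andP[c0 _] := cellmass_itv pA j; have /andP[_ c'1] := cellmass_itv hB j.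
by rewrite leNgt; apply/negP => /(hinc j _ _ c0 c'1); rewrite ltNge hle.
Qed.

Lemma cellmass_eq : c' =1 c.
Proof.
apply: ler_sum_eq cellmass_le _.
by rewrite (fpartition_cellmass_sum hB) (fpartition_cellmass_sum hA.1).
Qed.

Lemma ae_same_cell : fae (fun x => forall i j, A i x -> B j x -> i = j).
Proof.
apply: (fae_mono ae_cellmass_cmp) => x cmp i j Ai Bj.
have [//|ij] := eqVneq i j.
by have [_ /(_ ij)] := cmp i j Ai Bj; rewrite cellmass_eq ltxx.
Qed.

Lemma equilibrium_fae_eq i : fae_eq lam Om f (A i) (B i).
Proof.
apply/fae_eqP; have cells := fae_and (fpartition_ae_cell hA.1) (fpartition_ae_cell hB).
apply: (fae_mono (fae_and cells ae_same_cell)) => x [[[a [Aa ua]] [b [Bb ub]]] same].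
have ab := same a b Aa Bb; subst b.
by split=> [/ua|/ub] ->.
Qed.

End comparison.

End density.

Theorem proposition4p9 (R : realType) (d k : nat)
  (lam : {measure set (d.-tuple R) -> \bar R}) (Hlam : is_lebesgue lam)
  (Om : set (d.-tuple R)) (mOm : measurable Om) (bOm : bounded_Rd Om)
  (f : d.-tuple R -> R) (mf : measurable_fun Om f)
  (f0 : forall x, Om x -> 0 <= f x)
  (f1 : (\int[lam]_(x in Om) (f x)%:E = 1)%E)
  (p : R) (p1 : 1 <= p)
  (xs : 'I_k -> d.-tuple R) (xsOm : forall i, Om (xs i))
  (h : 'I_k -> R -> R)
  (h0 : forall i t, 0 <= t <= 1 -> 0 <= h i t)
  (hinc : forall i s t, 0 <= s -> t <= 1 -> s < t -> h i s < h i t)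
  (A B : 'I_k -> set (d.-tuple R))
  (hA : equilibrium lam Om f p xs h A)
  (hB : fpartition lam Om f B)
  (hC : fnegligible lam Om f
          [set x | Om x /\ ~ (cost lam Om f p xs h B x <= cost lam Om f p xs h A x)]) :
  forall i : 'I_k, fae_eq lam Om f (A i) (B i).
Proof. exact: (equilibrium_fae_eq mOm mf f0 f1 hinc hA hB hC). Qed.
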